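(* Let $c \in (0,1/2]$, $t_1 \in [0,1-2c]$, $t_2 \in [t_1+c,1-c]$, and let $p,q \in (0,1)$ with $p \neq q$. Let $F$, $\Lambda_{p,q}$ and $\gamma_r$ be as described in the context. Then for every $r\in\Lambda_{p,q}$, \[ \int_{F\times F}(x-y)\,d\gamma_r(x,y) = \frac{4(t_2-t_1)(q-r)(p-r)}{(p-q)\big(1-c+c(p+q-2r)\big)} - \left(\frac{p+q-2r}{p-q}\right)\int_{F\times F}|x-y|\,d\gamma_r(x,y). \]
   Context: Let $S_1(x)=cx+t_1$ and $S_2(x)=cx+t_2$ on $[0,1]$. Let $F\subseteq[0,1]$ be the unique nonempty compact set with $F=S_1(F)\cup S_2(F)$. For $p\in(0,1)$, $\mu_p$ is the unique Borel probability measure with $\mu_p = p\,\mu_p\circ S_1^{-1} + (1-p)\,\mu_p\circ S_2^{-1}$. On $[0,1]^2$ define $S_{i,j}(x,y)=(S_i(x),S_j(y))$ for $i,j\in\{1,2\}$. Let $\Lambda_{p,q}$ be the open interval $\max\{0,p+q-1\}<r<\min\{p,q\}$. For $r\in\Lambda_{p,q}$, $\gamma_r$ is the unique Borel probability measure on $[0,1]^2$ satisfying $\gamma_r = r\,\gamma_r\circ S_{1,1}^{-1} + (p-r)\,\gamma_r\circ S_{1,2}^{-1} + (q-r)\,\gamma_r\circ S_{2,1}^{-1} + (1-p-q+r)\,\gamma_r\circ S_{2,2}^{-1}$; it is supported on $F\times F$ and is a coupling of $\mu_p$ and $\mu_q$. *)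

From HB Require Import structures.
From mathcomp Require Import all_boot all_order all_algebra.
From mathcomp Require Import all_classical all_reals all_analysis.
Set Implicit Arguments. Unset Strict Implicit. Unset Printing Implicit Defensive.
Import Order.TTheory GRing.Theory Num.Theory.
Import numFieldNormedType.Exports.
Local Open Scope classical_set_scope.
Local Open Scope ring_scope.

Definition sim {R : realType} (c t : R) (x : R) : R := c * x + t.

Definition sim2 {R : realType} (c ti tj : R) (z : R * R) : R * R :=
  (sim c ti z.1, sim c tj z.2).

Definition is_attractor {R : realType} (c t1 t2 : R) (F : set R) : Prop :=
  F !=set0 /\ compact F /\ F = (sim c t1 @` F) `|` (sim c t2 @` F).

Definition gamma_selfsim {R : realType} (c t1 t2 p q r : R)
    (gamma : probability (R * R)%type R) : Prop :=
  forall A : set (R * R), measurable A ->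
    gamma A =
      (r%:E * gamma (sim2 c t1 t1 @^-1` A)
       + (p - r)%:E * gamma (sim2 c t1 t2 @^-1` A)
       + (q - r)%:E * gamma (sim2 c t2 t1 @^-1` A)
       + (1 - p - q + r)%:E * gamma (sim2 c t2 t2 @^-1` A))%E.

From HB Require Import structures.
From mathcomp Require Import all_boot all_order all_algebra.
From mathcomp Require Import all_classical all_reals all_analysis.
From mathcomp Require Import ring lra measurable_realfun.
Import Order.TTheory GRing.Theory Num.Theory.
Import numFieldNormedType.Exports.
Local Open Scope classical_set_scope.
Local Open Scope ring_scope.

(* Integrating x - y and |x - y| against the self-similarity equation of gamma
   expresses both moments through themselves: S_{i,j} multiplies x - y by c
   and adds t_i - t_j, and since t_2 - t_1 >= c, on the unit square the image
   of x - y has the sign of t_i - t_j whenever i <> j.  This gives two linear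
   equations in the two moments, whose solution is the stated formula.  The
   equations are derived on the intersection of F x F with [0,1]^2, which the
   S_{i,j} map into itself and which carries all the mass of gamma: gamma
   gives mass one to K_n x K_n for every iterate K_n of [0,1] under the
   Hutchinson operator, and the K_n shrink to F. *)

Section probability_full_sets.
Context {d} {T : measurableType d} {R : realType} {P : probability T R}.

Lemma probability_setC_eq0 (A : set T) : measurable A ->
  P (~` A) = 0%E <-> P A = 1%E.
Proof.
move=> mA; rewrite probability_setC //; split => [|->]; last by rewrite subee.
have : P A \is a fin_num.
  by rewrite ge0_fin_numE ?measure_ge0 // (le_lt_trans (probability_le1 _ mA)) ?ltey.
by move=> /fineK <- /eqP; rewrite -EFinB eqe subr_eq0 => /eqP <-.
Qed.

Lemma probability_bigcap_full (A : (set T)^nat) :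
  (forall n, measurable (A n)) -> (forall n, P (A n) = 1%E) ->
  P (~` \bigcap_n A n) = 0%E.
Proof.
move=> mA A1; have An : forall n, P.-negligible (~` A n).
  move=> n; exists (~` A n); split => //; first exact: measurableC.
  exact/probability_setC_eq0.
have [N [mN N0 sN]] := negligible_bigcup An.
apply/eqP; rewrite eq_le measure_ge0 andbT -N0; apply: le_measure; rewrite ?inE //.
  by apply: measurableC; apply: bigcapT_measurable.
by rewrite setC_bigcap.
Qed.

Lemma bounded_integrable (D : set T) (g : T -> R) (M : R) :
  measurable D -> measurable_fun setT g -> (forall z, D z -> `|g z| <= M) ->
  P.-integrable D (EFin \o g).
Proof.
move=> mD mg gM; apply: measurable_bounded_integrable => //.
- by rewrite (le_lt_trans (probability_le1 _ mD)) // ltey.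
- exact: measurable_funTS.
exists M; split; first exact: num_real.
by move=> N MN z Dz; rewrite /= (le_trans (gM z Dz)) // ltW.
Qed.

Lemma Rintegral_affine (D : set T) (g : T -> R) (k1 k0 : R) :
  measurable D -> P D = 1%E -> P.-integrable D (EFin \o g) ->
  Rintegral P D (fun z => k1 * g z + k0) = k1 * Rintegral P D g + k0.
Proof.
move=> mD D1 ig.
have i0 : P.-integrable D (EFin \o (fun=> k0)).
  by apply: (bounded_integrable _ _ `|k0|).
have i1 : P.-integrable D (EFin \o (fun z => k1 * g z)).
  by apply: (eq_integrable mD _ _ _ (integrableZl mD k1 ig)) => z _ /=; rewrite EFinM.
rewrite (RintegralD mD i1 i0) RintegralZl // Rintegral_cst //.
by rewrite (_ : fine (P D) = 1) ?mulr1 //; exact: (congr1 fine D1).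
Qed.

End probability_full_sets.

Section integral_full_sets.
Context {d} {T : measurableType d} {R : realType} {mu : {measure set T -> \bar R}}.
Local Open Scope ereal_scope.

Lemma ge0_integral_setI_full (A Q : set T) (f : T -> \bar R) :
  measurable A -> measurable Q -> mu (~` Q) = 0%E ->
  measurable_fun A f -> (forall z, A z -> (0 <= f z)%E) ->
  (\int[mu]_(z in A) f z = \int[mu]_(z in A `&` Q) f z)%E.
Proof.
move=> mA mQ Q0 mf f0.
by rewrite (ge0_negligible_integral _ _ mf f0 Q0) ?setDE ?setCK //; exact: measurableC.
Qed.

Lemma Rintegral_setI_full (A Q : set T) (g : T -> R) :
  measurable A -> measurable Q -> mu (~` Q) = 0%E -> measurable_fun setT g ->
  Rintegral mu A g = Rintegral mu (A `&` Q) g.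
Proof.
move=> mA mQ Q0 mg; have mE : measurable_fun setT (EFin \o g).
  exact/measurable_EFinP.
rewrite /Rintegral integralE [in RHS]integralE.
rewrite !(ge0_integral_setI_full A Q) //.
all: try by move=> z _; rewrite ?funeneg_ge0 ?funepos_ge0.
all: apply: measurable_funTS; by [apply: measurable_funeneg | apply: measurable_funepos].
Qed.

End integral_full_sets.

Section similarities.
Context {R : realType}.

Lemma measurable_sim (c t : R) : measurable_fun setT (sim c t).
Proof.
apply: measurable_funD; last exact: measurable_cst.
by apply: measurable_funM; [exact: measurable_cst | exact: measurable_id].
Qed.

Lemma measurable_sim2 (c a b : R) : measurable_fun setT (sim2 c a b).
Proof.
apply/measurable_fun_pairP; split.
- exact: measurableT_comp (measurable_sim c a) measurable_fst.
- exact: measurableT_comp (measurable_sim c b) measurable_snd.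
Qed.

Lemma sim_itv01 (c t x : R) : 0 <= c -> 0 <= t <= 1 - c ->
  x \in `[0, 1] -> sim c t x \in `[0, 1].
Proof.
move=> c0 /andP[t0 t1]; rewrite !in_itv /= => /andP[x0 x1].
have := mulr_ge0 c0 x0; have := ler_wpM2l c0 x1; rewrite mulr1 /sim => ? ?.
by apply/andP; split; lra.
Qed.

Lemma measurable_sub_proj : measurable_fun setT (fun z : R * R => z.1 - z.2).
Proof. by apply: measurable_funB; [exact: measurable_fst | exact: measurable_snd]. Qed.

Lemma measurable_norm_sub_proj :
  measurable_fun setT (fun z : R * R => `|z.1 - z.2|).
Proof. by apply: measurableT_comp => //; exact: measurable_sub_proj. Qed.

Lemma measurable_sim2_preimage (c a b : R) (A : set (R * R)) :
  measurable A -> measurable (sim2 c a b @^-1` A).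
Proof. by move=> mA; rewrite -[_ @^-1` _]setTI; exact: measurable_sim2. Qed.

End similarities.

Section selfsim_integral.
Context {R : realType} {gamma : probability (R * R)%type R}.
Context {c t1 t2 p q r : R}.
Hypotheses (r_ge0 : 0 <= r) (pr_ge0 : 0 <= p - r) (qr_ge0 : 0 <= q - r).
Hypothesis pqr_ge0 : 0 <= 1 - p - q + r.
Hypothesis gamma_ss : gamma_selfsim c t1 t2 p q r gamma.

Definition sim2_image (a b : R) : {measure set (R * R)%type -> \bar R}.
Proof. by refine (pushforward gamma (sim2 c a b)); exact: measurable_sim2. Defined.

Local Open Scope ereal_scope.

Lemma ge0_integral_selfsim (D : set (R * R)) (f : R * R -> \bar R) :
  measurable D -> measurable_fun setT f -> (forall z, D z -> 0 <= f z) ->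
  \int[gamma]_(z in D) f z =
     r%:E * \int[gamma]_(z in sim2 c t1 t1 @^-1` D) (f \o sim2 c t1 t1) z
   + (p - r)%:E * \int[gamma]_(z in sim2 c t1 t2 @^-1` D) (f \o sim2 c t1 t2) z
   + (q - r)%:E * \int[gamma]_(z in sim2 c t2 t1 @^-1` D) (f \o sim2 c t2 t1) z
   + (1 - p - q + r)%:E
       * \int[gamma]_(z in sim2 c t2 t2 @^-1` D) (f \o sim2 c t2 t2) z.
Proof.
move=> mD mf f0; have mfD : measurable_fun D f by exact: measurable_funTS.
pose nu := measure_add
  (measure_add (mscale (NngNum r_ge0) (sim2_image t1 t1))
               (mscale (NngNum pr_ge0) (sim2_image t1 t2)))
  (measure_add (mscale (NngNum qr_ge0) (sim2_image t2 t1))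
               (mscale (NngNum pqr_ge0) (sim2_image t2 t2))).
rewrite (eq_measure_integral nu); last first.
  move=> A mA _; apply: etrans; first exact: (gamma_ss _ mA).
  rewrite /nu /= /measure_add /msum !big_ord_recl !big_ord0 /=.
  by rewrite /msum !big_ord_recl !big_ord0 /= !adde0 addeA.
rewrite !ge0_integral_measure_add // !ge0_integral_mscale //.
rewrite !ge0_integral_pushforward ?addeA //; try exact: measurable_sim2.
all: by move=> z /set_mem; exact: f0.
Qed.

Local Close Scope ereal_scope.

Context {D : set (R * R)}.
Hypotheses (mD : measurable D) (D_full : gamma (~` D) = 0%E).
Hypothesis D_stable : forall a b, (a = t1 \/ a = t2) -> (b = t1 \/ b = t2) ->
  D `<=` sim2 c a b @^-1` D.

Lemma Rintegral_selfsim (f : R * R -> R) (M : R) :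
  measurable_fun setT f -> (forall z, D z -> 0 <= f z <= M) ->
  Rintegral gamma D f =
      r * Rintegral gamma D (f \o sim2 c t1 t1)
    + (p - r) * Rintegral gamma D (f \o sim2 c t1 t2)
    + (q - r) * Rintegral gamma D (f \o sim2 c t2 t1)
    + (1 - p - q + r) * Rintegral gamma D (f \o sim2 c t2 t2).
Proof.
move=> mf f0M; have mEf : measurable_fun setT (EFin \o f) by exact/measurable_EFinP.
have Ef0 z : D z -> (0 <= (EFin \o f) z)%E.
  by move=> /f0M /andP[f0 _]; rewrite lee_fin.
have integral_preimage a b : (a = t1 \/ a = t2) -> (b = t1 \/ b = t2) ->
    (\int[gamma]_(z in sim2 c a b @^-1` D) ((EFin \o f) \o sim2 c a b) z
     = (Rintegral gamma D (f \o sim2 c a b))%:E)%E.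
  move=> ha hb; have mS := measurable_sim2 c a b.
  rewrite (ge0_integral_setI_full _ D) //.
  - rewrite setIidr; last exact: D_stable.
    apply/esym/fineK/(integrable_fin_num mD).
    apply: (bounded_integrable _ _ M) => //; first exact: measurableT_comp.
    by move=> z /(D_stable _ _ ha hb) /f0M /andP[f0 fM]; rewrite ger0_norm.
  - exact: measurable_sim2_preimage.
  - by apply: measurable_funTS; exact: measurableT_comp.
  - by move=> z; exact: Ef0.
rewrite /Rintegral (ge0_integral_selfsim _ _ mD mEf Ef0).
by rewrite !integral_preimage; [rewrite -!EFinM -!EFinD | by [left|right] ..].
Qed.

Hypothesis D_unit : D `<=` `[0, 1] `*` `[0, 1].

Let gamma_D : gamma D = 1%E. Proof. exact/probability_setC_eq0. Qed.

Let D_box z : D z -> 0 <= z.1 <= 1 /\ 0 <= z.2 <= 1.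
Proof. by move=> /D_unit[/=]; rewrite !in_itv. Qed.

Let integrable_diff : gamma.-integrable D (EFin \o (fun z => z.1 - z.2)).
Proof.
apply: (bounded_integrable _ _ 1) => //; first exact: measurable_sub_proj.
move=> z /D_box[/andP[? ?] /andP[? ?]].
by rewrite ler_norml; apply/andP; split; lra.
Qed.

Lemma Rintegral_diff_selfsim :
  Rintegral gamma D (fun z => z.1 - z.2) * (1 - c) = (q - p) * (t2 - t1).
Proof.
set I := Rintegral gamma D _.
have shift a b : Rintegral gamma D ((fun z => z.1 - z.2 + 1) \o sim2 c a b)
    = c * I + (a - b + 1).
  rewrite -Rintegral_affine //; apply: eq_Rintegral => z _ /=; rewrite /sim; ring.
have mf : measurable_fun setT (fun z : R * R => z.1 - z.2 + 1).
  by apply: measurable_funD; [exact: measurable_sub_proj | exact: measurable_cst].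
have f02 z : D z -> 0 <= z.1 - z.2 + 1 <= 2.
  by move=> /D_box[/andP[? ?] /andP[? ?]]; apply/andP; split; lra.
have := Rintegral_selfsim _ _ mf f02; rewrite !shift.
have -> : Rintegral gamma D (fun z => z.1 - z.2 + 1) = 1 * I + 1.
  by rewrite -Rintegral_affine //; apply: eq_Rintegral => z _; rewrite mul1r.
move=> E; lra.
Qed.

Hypotheses (c_gt0 : 0 < c) (t12 : t1 + c <= t2).

Lemma Rintegral_absdiff_selfsim :
  Rintegral gamma D (fun z => `|z.1 - z.2|) * (1 - c + c * (p + q - 2 * r))
  = (p + q - 2 * r) * (t2 - t1)
    + c * (q - p) * Rintegral gamma D (fun z => z.1 - z.2).
Proof.
set I := Rintegral gamma D (fun z => z.1 - z.2).
set J := Rintegral gamma D _.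
have mf : measurable_fun setT (fun z : R * R => `|z.1 - z.2|).
  exact: measurable_norm_sub_proj.
have f01 z : D z -> 0 <= `|z.1 - z.2| <= 1.
  move=> /D_box[/andP[? ?] /andP[? ?]]; rewrite normr_ge0 ler_norml.
  by apply/andP; split; lra.
have iJ : gamma.-integrable D (EFin \o (fun z => `|z.1 - z.2|)).
  by apply: (bounded_integrable _ _ 1) => // z /f01 /andP[? ?]; rewrite normr_id.
have diag a : Rintegral gamma D ((fun z => `|z.1 - z.2|) \o sim2 c a a) = c * J + 0.
  rewrite -Rintegral_affine //; apply: eq_Rintegral => z _ /=.
  by rewrite /sim addr0 opprD addrACA subrr addr0 -mulrBr normrM gtr0_norm.
have off12 : Rintegral gamma D ((fun z => `|z.1 - z.2|) \o sim2 c t1 t2)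
    = - c * I + (t2 - t1).
  rewrite -Rintegral_affine //; apply: eq_Rintegral => z.
  rewrite inE => /D_box[/andP[x0 x1] /andP[y0 y1]] /=.
  have cx1 := ler_wpM2l (ltW c_gt0) x1; rewrite mulr1 in cx1.
  have cy0 := mulr_ge0 (ltW c_gt0) y0.
  (* lra only reads local hypotheses, not section ones such as t12 *)
  have neg : c * z.1 + t1 - (c * z.2 + t2) <= 0 by have := t12; lra.
  by rewrite /sim (ler0_norm neg); ring.
have off21 : Rintegral gamma D ((fun z => `|z.1 - z.2|) \o sim2 c t2 t1)
    = c * I + (t2 - t1).
  rewrite -Rintegral_affine //; apply: eq_Rintegral => z.
  rewrite inE => /D_box[/andP[x0 x1] /andP[y0 y1]] /=.
  have cy1 := ler_wpM2l (ltW c_gt0) y1; rewrite mulr1 in cy1.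
  have cx0 := mulr_ge0 (ltW c_gt0) x0.
  have pos : 0 <= c * z.1 + t2 - (c * z.2 + t1) by have := t12; lra.
  by rewrite /sim (ger0_norm pos); ring.
have := Rintegral_selfsim _ _ mf f01; rewrite !diag off12 off21 => E.
rewrite -/J in E; lra.
Qed.

End selfsim_integral.

Lemma moment_system_solution (K : fieldType) (c t p q r I J : K) :
  p - q != 0 -> 1 - c + c * (p + q - 2 * r) != 0 ->
  I * (1 - c) = (q - p) * t ->
  J * (1 - c + c * (p + q - 2 * r)) = (p + q - 2 * r) * t + c * (q - p) * I ->
  I = 4 * t * (q - r) * (p - r) / ((p - q) * (1 - c + c * (p + q - 2 * r)))
      - (p + q - 2 * r) / (p - q) * J.
Proof.
move=> pq den eI eJ.
have -> : J = ((p + q - 2 * r) * t + c * (q - p) * I) / (1 - c + c * (p + q - 2 * r)).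
  by rewrite -eJ mulfK.
have -> : t = - (I * (1 - c)) / (p - q) by rewrite eI; field.
by field; rewrite den pq.
Qed.

Section hutchinson.
Context {R : realType}.
Variables (c t1 t2 : R).

Definition hutchinson (A : set R) : set R := sim c t1 @` A `|` sim c t2 @` A.

Definition hutchinson_iter (n : nat) : set R := iter n hutchinson `[0%R, 1%R]%classic.

Lemma hutchinson_sim (A : set R) (t x : R) :
  t = t1 \/ t = t2 -> A x -> hutchinson A (sim c t x).
Proof. by move=> [->|->] Ax; [left|right]; exists x. Qed.

Lemma image_sim (t : R) (A : set R) :
  c != 0 -> sim c t @` A = (fun y => (y - t) / c) @^-1` A.
Proof.
move=> c0; apply/seteqP; split => [_ [x Ax <-]|y Ay] /=.
  by rewrite /sim addrK mulrC mulKf.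
by exists ((y - t) / c) => //; rewrite /sim mulrC divfK // subrK.
Qed.

Lemma measurable_hutchinson_iter n : c != 0 -> measurable (hutchinson_iter n).
Proof.
move=> c0; elim: n => [|n IH] /=; first exact: measurable_itv.
have mi t : measurable_fun setT (fun y : R => (y - t) / c).
  apply: measurable_funM; last exact: measurable_cst.
  by apply: measurable_funB; [exact: measurable_id | exact: measurable_cst].
by apply: measurableU; rewrite image_sim // -[_ @^-1` _]setTI; exact: mi.
Qed.

Lemma hutchinson_iter_near (F : set R) (y0 : R) : F y0 -> 0 <= c ->
    hutchinson F `<=` F ->
  forall n x, hutchinson_iter n x ->
    exists2 y, F y & `|x - y| <= (1 + `|y0|) * c ^+ n.
Proof.
move=> Fy0 c0 HF; elim => [|n IH] x /=.
  rewrite in_itv /= => /andP[x0 x1]; exists y0 => //.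
  by rewrite expr0 mulr1 (le_trans (ler_normB _ _)) // lerD2r ger0_norm.
have step t w : t = t1 \/ t = t2 -> hutchinson_iter n w ->
    exists2 y, F y & `|sim c t w - y| <= (1 + `|y0|) * c ^+ n.+1.
  move=> ht /IH[y Fy wy]; exists (sim c t y); first exact/HF/hutchinson_sim.
  rewrite /sim opprD addrACA subrr addr0 -mulrBr normrM ger0_norm //.
  by rewrite exprS mulrCA ler_wpM2l.
by rewrite /hutchinson /setU => -[] [w Kw <-]; apply: step Kw; [left | right].
Qed.

Lemma bigcap_hutchinson_iter_sub (F : set R) : F !=set0 -> 0 <= c -> c < 1 ->
  closed F -> hutchinson F `<=` F -> \bigcap_n hutchinson_iter n `<=` F.
Proof.
move=> [y0 Fy0] c0 c1 cF HF x Kx; apply: contrapT => nFx.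
have /nbhs_ballP[e /= e0 eF] := closed_openC cF _ nFx.
have M0 : 0 < 1 + `|y0| by rewrite ltr_pwDl.
have cn0 : (GRing.exp c : R^nat) @ \oo --> 0 by apply: cvg_expr; rewrite ger0_norm.
have [N _ hN] := cvgr0_norm_lt _ cn0 _ (divr_gt0 e0 M0).
have := hN N (leqnn N); rewrite /= ger0_norm ?exprn_ge0 // => cN.
have [y Fy xy] := hutchinson_iter_near _ _ Fy0 c0 HF _ _ (Kx N I).
apply: (eF y) => //; rewrite -ball_normE /= (le_lt_trans xy) //.
by rewrite mulrC -ltr_pdivlMr.
Qed.

End hutchinson.

Lemma selfsim_hutchinson_iter {R : realType} {gamma : probability (R * R)%type R}
    {c t1 t2 p q r : R} :
  c != 0 -> gamma_selfsim c t1 t2 p q r gamma ->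
  gamma (`[0, 1] `*` `[0, 1]) = 1%E ->
  forall n, gamma (hutchinson_iter c t1 t2 n `*` hutchinson_iter c t1 t2 n) = 1%E.
Proof.
move=> c0 gamma_ss Q1; elim => [|n IH]; first exact: Q1.
set K := hutchinson_iter c t1 t2.
have mK m : measurable (K m `*` K m).
  by apply: measurableX; exact: measurable_hutchinson_iter.
have preimage1 a b : a = t1 \/ a = t2 -> b = t1 \/ b = t2 ->
    gamma (sim2 c a b @^-1` (K n.+1 `*` K n.+1)) = 1%E.
  move=> ha hb; have mS := measurable_sim2_preimage c a b _ (mK n.+1).
  apply/eqP; rewrite eq_le probability_le1 //= -IH le_measure ?inE //.
  by move=> z [? ?]; split; apply: hutchinson_sim.
apply: etrans (gamma_ss _ (mK n.+1)) _.
rewrite !preimage1; try by [left | right].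
by rewrite !mule1 -!EFinD; congr EFin; ring.
Qed.

Section attractor_box.
Context {R : realType} {c t1 t2 : R} {F : set R}.
Hypothesis F_attractor : is_attractor c t1 t2 F.

Lemma attractor_hutchinson : hutchinson c t1 t2 F = F.
Proof. by case: F_attractor => _ [_ {2}->]. Qed.

Lemma measurable_attractor : measurable F.
Proof.
have [_ [cF _]] := F_attractor.
exact: closed_measurable (compact_closed (@Rhausdorff R) cF).
Qed.

Lemma attractor_box_stable (a b : R) :
  0 <= c -> 0 <= t1 -> t1 <= t2 -> t2 <= 1 - c ->
  a = t1 \/ a = t2 -> b = t1 \/ b = t2 ->
  F `*` F `&` `[0, 1] `*` `[0, 1] `<=`
    sim2 c a b @^-1` (F `*` F `&` `[0, 1] `*` `[0, 1]).
Proof.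
move=> c0 t1_ge0 t12 t2_le ha hb [x y] [[Fx Fy] [/= x01 y01]].
have itv t : t = t1 \/ t = t2 -> 0 <= t <= 1 - c by case=> ->; apply/andP; lra.
split; split; rewrite /= ?sim_itv01 ?itv //.
- by rewrite -attractor_hutchinson; exact: hutchinson_sim.
- by rewrite -attractor_hutchinson; exact: hutchinson_sim.
Qed.

Lemma selfsim_attractor_box_full (gamma : probability (R * R)%type R) (p q r : R) :
  0 < c -> c < 1 -> gamma_selfsim c t1 t2 p q r gamma ->
  gamma (`[0, 1] `*` `[0, 1]) = 1%E ->
  gamma (~` (F `*` F `&` `[0, 1] `*` `[0, 1])) = 0%E.
Proof.
move=> c_gt0 c_lt1 gamma_ss Q1; pose K := hutchinson_iter c t1 t2.
have [F0 [cF _]] := F_attractor.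
have KF : \bigcap_n K n `<=` F.
  apply: bigcap_hutchinson_iter_sub; rewrite ?attractor_hutchinson ?ltW //.
  exact: compact_closed (@Rhausdorff R) cF.
have mK n : measurable (K n `*` K n).
  by apply: measurableX; apply: measurable_hutchinson_iter; exact: lt0r_neq0.
have K1 := selfsim_hutchinson_iter (lt0r_neq0 c_gt0) gamma_ss Q1.
apply/eqP; rewrite eq_le measure_ge0 andbT -(probability_bigcap_full _ mK K1).
rewrite le_measure ?inE //.
- apply: measurableC; apply: measurableI; last by apply: measurableX; exact: measurable_itv.
  by apply: measurableX; exact: measurable_attractor.
- by apply: measurableC; exact: bigcapT_measurable.
apply: subsetC => z Kz; have Kz2 n : (K n `*` K n) z := Kz n I.
split; last exact: Kz2 0%N.
by split; apply: KF => n _; have [] := Kz2 n.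
Qed.

End attractor_box.

Theorem lemma3p1 (R : realType) (c t1 t2 p q r : R) (F : set R)
    (gamma : probability (R * R)%type R) :
  0 < c -> c <= 1 / 2 ->
  0 <= t1 -> t1 <= 1 - 2 * c ->
  t1 + c <= t2 -> t2 <= 1 - c ->
  0 < p -> p < 1 -> 0 < q -> q < 1 -> p != q ->
  is_attractor c t1 t2 F ->
  Num.max 0 (p + q - 1) < r -> r < Num.min p q ->
  gamma (`[0, 1] `*` `[0, 1]) = 1%E ->
  gamma_selfsim c t1 t2 p q r gamma ->
  Rintegral gamma (F `*` F) (fun z => z.1 - z.2) =
    4 * (t2 - t1) * (q - r) * (p - r) / ((p - q) * (1 - c + c * (p + q - 2 * r)))
    - (p + q - 2 * r) / (p - q) * Rintegral gamma (F `*` F) (fun z => `|z.1 - z.2|).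
Proof.
move=> c_gt0 c_le t1_ge0 t1_le t12 t2_le p_gt0 p_lt1 q_gt0 q_lt1 pq
  F_attractor r_gt r_lt Q1 gamma_ss.
move: r_gt r_lt; rewrite gt_max lt_min => /andP[r_gt0 pqr] /andP[rp rq].
have r_ge0 : 0 <= r by exact: ltW.
have pr_ge0 : 0 <= p - r by rewrite subr_ge0 ltW.
have qr_ge0 : 0 <= q - r by rewrite subr_ge0 ltW.
have pqr_ge0 : 0 <= 1 - p - q + r by lra.
have c_lt1 : c < 1 by lra.
pose Q : set (R * R) := `[0, 1] `*` `[0, 1].
have mQ : measurable Q by apply: measurableX; exact: measurable_itv.
have Q_full : gamma (~` Q) = 0%E by apply/probability_setC_eq0.
have mFF : measurable (F `*` F).
  by apply: measurableX; exact: measurable_attractor F_attractor.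
have mD : measurable (F `*` F `&` Q) by exact: measurableI.
have D_full := selfsim_attractor_box_full F_attractor _ _ _ _ c_gt0 c_lt1 gamma_ss Q1.
have t1_le_t2 : t1 <= t2 by lra.
have D_stable a b := attractor_box_stable F_attractor a b (ltW c_gt0) t1_ge0
  t1_le_t2 t2_le.
rewrite (Rintegral_setI_full _ _ _ mFF mQ Q_full measurable_sub_proj).
rewrite (Rintegral_setI_full _ _ _ mFF mQ Q_full measurable_norm_sub_proj).
have den_gt0 : 0 < 1 - c + c * (p + q - 2 * r).
  have : 0 < c * (p + q - 2 * r) by apply: mulr_gt0 => //; lra.
  lra.
apply: moment_system_solution; first by rewrite subr_eq0.
- exact: lt0r_neq0.
- exact (Rintegral_diff_selfsim r_ge0 pr_ge0 qr_ge0 pqr_ge0 gamma_ss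
    mD D_full D_stable (@subIsetr _ _ Q)).
- exact (Rintegral_absdiff_selfsim r_ge0 pr_ge0 qr_ge0 pqr_ge0 gamma_ss
    mD D_full D_stable (@subIsetr _ _ Q) c_gt0 t12).
Qed.
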